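(* Let $0<\theta<\frac{\pi}{4}$ and let $N\ge 2$ be an integer. Let $|\psi_{\mathrm{GGHZ}}\rangle=\cos\theta|000\rangle+\sin\theta|111\rangle$ and $|\psi_{\mathrm{GHZ}}\rangle=\frac{1}{\sqrt2}(|000\rangle+|111\rangle)$ be three-qubit states on $\mathcal H_A\otimes\mathcal H_B\otimes\mathcal H_C$. For $x\in\{0,1,2\}$ and $a\in\{0,1\}$ let $P_{a|x}$ be the projector onto the eigenvector of $\sigma_x$ (if $x=0$), $\sigma_y$ (if $x=1$), $\sigma_z$ (if $x=2$) with eigenvalue $(-1)^a$. Define the assemblages on Bob–Charlie $$\sigma^{\mathrm{GGHZ}}_{a|x}=\mathrm{Tr}_A\big[(P_{a|x}\otimes\mathbb 1\otimes\mathbb 1)|\psi_{\mathrm{GGHZ}}\rangle\langle\psi_{\mathrm{GGHZ}}|\big],\qquad \sigma^{\mathrm{GHZ}}_{a|x}=\mathrm{Tr}_A\big[(P_{a|x}\otimes\mathbb 1\otimes\mathbb 1)|\psi_{\mathrm{GHZ}}\rangle\langle\psi_{\mathrm{GHZ}}|\big].$$ Let $P_{\mathrm{fail}}=(1-2\sin^2\theta)^{N-1}$, $P_{\mathrm{success}}=1-P_{\mathrm{fail}}$, and let $\sigma^{\mathrm{dist}}_{a|x}=P_{\mathrm{success}}\,\sigma^{\mathrm{GHZ}}_{a|x}+P_{\mathrm{fail}}\,\sigma^{\mathrm{GGHZ}}_{a|x}$ be the assemblage obtained on average from $N$ copies of $\{\sigma^{\mathrm{GGHZ}}_{a|x}\}$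 by the distillation protocol described in the context. Then $$\mathcal F_A\big(\{\sigma^{\mathrm{dist}}_{a|x}\}_{a,x},\{\sigma^{\mathrm{GHZ}}_{a|x}\}_{a,x}\big)=\sqrt{1-\tfrac12(1-\sin2\theta)(\cos2\theta)^{N-1}}.$$
   Context: $\sigma_x,\sigma_y,\sigma_z$ are the Pauli matrices in the computational basis $\{|0\rangle,|1\rangle\}$. For positive semidefinite operators $A,B$, the fidelity is $\mathcal F(A,B)=\mathrm{Tr}\big[\sqrt{\sqrt A B\sqrt A}\big]$. For two assemblages $\{\sigma_{a|x}\}$, $\{\tau_{a|x}\}$ (collections of unnormalized states indexed by Alice's input $x$ and outcome $a$), the assemblage fidelity is $\mathcal F_A(\{\sigma_{a|x}\},\{\tau_{a|x}\})=\min_x\sum_a\mathcal F(\sigma_{a|x},\tau_{a|x})$. The distillation protocol (one-sided device-independent setting: Alice untrusted, Bob and Charlie trusted): on each of the first $N-1$ copies the trusted party/parties apply a local two-outcome filter (e.g. Bob alone with Kraus operators $K_0=\mathrm{diag}(\tan\theta,1)$, $K_1=\mathrm{diag}(\sqrt{1-\tan^2\theta},0)$); outcome $0$, which occurs with probability $2\sin^2\theta$ per copy, transforms the copy into $\{\sigma^{\mathrm{GHZ}}_{a|x}\}$; copies with outcome $1$ are discarded, and if all first $N-1$ copies fail the untouched $N$-th copy is kept. Thus on average the output is the convex combination $\sigma^{\mathrm{dist}}$ defined in the claim. *)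

From mathcomp Require Import all_boot all_order all_algebra.
From mathcomp Require Import boolp classical_sets reals trigo.
From mathcomp.real_closed Require Import complex.
Set Implicit Arguments. Unset Strict Implicit. Unset Printing Implicit Defensive.
Import GRing.Theory Num.Theory.
Local Open Scope ring_scope.
Local Open Scope complex_scope.

Section QInfo.
Variable R : realType.
Local Notation C := R[i].

Definition hc m n (M : 'M[C]_(m, n)) : 'M[C]_(n, m) := (map_mx conjc M)^T.

Definition psd n (A : 'M[C]_n) : Prop :=
  hc A = A /\ forall v : 'cV[C]_n, 0 <= (hc v *m A *m v) 0 0.

(* the (unique) positive semidefinite square root of a PSD matrix
   (chosen classically; 0 if no PSD square root exists) *)
Definition mxsqrt n (A : 'M[C]_n) : 'M[C]_n :=
  xget 0 [set S : 'M[C]_n | psd S /\ S *m S = A].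

Definition fidelity n (A B : 'M[C]_n) : C :=
  \tr (mxsqrt (mxsqrt A *m B *m mxsqrt A)).

Definition kron m1 n1 m2 n2 (A : 'M[C]_(m1, n1)) (B : 'M[C]_(m2, n2))
  : 'M[C]_(m1 * m2, n1 * n2) :=
  \sum_(i < m1) \sum_(j < n1) \sum_(k < m2) \sum_(l < n2)
     (A i j * B k l) *: delta_mx (mxvec_index i k) (mxvec_index j l).

Definition ptrace1 m n (M : 'M[C]_(m * n)) : 'M[C]_n :=
  \matrix_(j < n, k < n) \sum_(i < m) M (mxvec_index i j) (mxvec_index i k).

Definition q0 : 'I_2 := ord0.
Definition q1 : 'I_2 := ord_max.

Definition sigma_x : 'M[C]_2 := delta_mx q0 q1 + delta_mx q1 q0.
Definition sigma_y : 'M[C]_2 := (- 'i) *: delta_mx q0 q1 + 'i *: delta_mx q1 q0.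
Definition sigma_z : 'M[C]_2 := delta_mx q0 q0 - delta_mx q1 q1.

Definition pauli (x : 'I_3) : 'M[C]_2 :=
  if val x == 0%N then sigma_x else if val x == 1%N then sigma_y else sigma_z.

(* projector onto the eigenspace of the Pauli matrix with eigenvalue (-1)^a
   (Pauli matrices square to 1 with eigenvalues +-1, so this is the spectral projector) *)
Definition proj (a : 'I_2) (x : 'I_3) : 'M[C]_2 :=
  2^-1 *: (1%:M + (-1) ^+ a *: pauli x).

Definition ket3 (a b c : 'I_2) : 'cV[C]_(2 * (2 * 2)) :=
  delta_mx (mxvec_index a (mxvec_index b c)) 0.

Definition psi_GGHZ (theta : R) : 'cV[C]_(2 * (2 * 2)) :=
  (cos theta)%:C *: ket3 q0 q0 q0 + (sin theta)%:C *: ket3 q1 q1 q1.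

Definition psi_GHZ : 'cV[C]_(2 * (2 * 2)) :=
  (Num.sqrt (2 : R))^-1%:C *: (ket3 q0 q0 q0 + ket3 q1 q1 q1).

Definition assemblage (psi : 'cV[C]_(2 * (2 * 2))) (x : 'I_3) (a : 'I_2)
  : 'M[C]_(2 * 2) :=
  ptrace1 (kron (proj a x) (1%:M : 'M[C]_(2 * 2)) *m (psi *m hc psi)).

Definition sigma_GGHZ (theta : R) := assemblage (psi_GGHZ theta).
Definition sigma_GHZ := assemblage psi_GHZ.

Definition P_fail (theta : R) (N : nat) : R := (1 - 2 * sin theta ^+ 2) ^+ (N.-1).
Definition P_success (theta : R) (N : nat) : R := 1 - P_fail theta N.

Definition sigma_dist (theta : R) (N : nat) (x : 'I_3) (a : 'I_2) : 'M[C]_(2 * 2) :=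
  (P_success theta N)%:C *: sigma_GHZ x a + (P_fail theta N)%:C *: sigma_GGHZ theta x a.

(* assemblage fidelity F_A = min_x sum_a F(sigma_{a|x}, tau_{a|x}), x in {0,1,2}
   (min taken in the order of C; all fidelities are nonnegative reals) *)
Definition assemblage_fidelity (s t : 'I_3 -> 'I_2 -> 'M[C]_(2 * 2)) : C :=
  let g := fun x : 'I_3 => \sum_(a < 2) fidelity (s x a) (t x a) in
  Num.min (g (inord 0)) (Num.min (g (inord 1)) (g (inord 2))).

End QInfo.

From mathcomp Require Import all_boot all_order all_algebra.
From mathcomp Require Import boolp classical_sets reals trigo.
From mathcomp.real_closed Require Import complex.
From mathcomp Require Import ring lra.
Import GRing.Theory Num.Theory.
Local Open Scope complex_scope.
Local Open Scope ring_scope.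
Set Implicit Arguments. Unset Strict Implicit. Unset Printing Implicit Defensive.

(* Both states are combinations of the |kkk>, so when Alice's projector is
   lam p p^*, each assemblage element lives on span{|00>, |11>} and is lam v v^*
   there, with v_k = conj(p_k) alpha_k.  The GHZ elements are therefore rank
   one, and F(A, w w^* ) = |sqrt A w| = sqrt(w^* A w) once A has a positive
   semidefinite square root; for 2x2 matrices Cayley-Hamilton provides one,
   (M + sqrt(det M)) / sqrt(tr M + 2 sqrt(det M)).  With
   K = P_s + P_f (cos t + sin t)^2 / 2, each outcome of sigma_x and of sigma_y
   contributes sqrt K / 2, while the outcomes of sigma_z contribute sqrt A and
   sqrt B with A + B + 2 sqrt(A B) >= K.  So the minimum over the settings is
   sqrt K = sqrt(1 - (1 - sin 2t) cos(2t)^(N-1) / 2). *)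

Section PsdMatrices.
Variable R : realType.
Local Notation C := R[i].

Lemma hcE m n (M : 'M[C]_(m, n)) i j : hc M i j = (M j i)^*.
Proof. by rewrite !mxE. Qed.

Lemma hcK m n (M : 'M[C]_(m, n)) : hc (hc M) = M.
Proof. by apply/matrixP => i j; rewrite !hcE conjCK. Qed.

Lemma hcM m n p (A : 'M[C]_(m, n)) (B : 'M[C]_(n, p)) : hc (A *m B) = hc B *m hc A.
Proof. by rewrite /hc map_mxM trmx_mul. Qed.

Lemma hcD m n (A B : 'M[C]_(m, n)) : hc (A + B) = hc A + hc B.
Proof. by apply/matrixP => i j; rewrite !mxE rmorphD. Qed.

Lemma hcZ m n a (A : 'M[C]_(m, n)) : hc (a *: A) = a^* *: hc A.
Proof. by apply/matrixP => i j; rewrite !mxE rmorphM. Qed.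

Lemma quadD n (v : 'cV[C]_n) (A B : 'M[C]_n) :
  (hc v *m (A + B) *m v) 0 0 = (hc v *m A *m v) 0 0 + (hc v *m B *m v) 0 0.
Proof. by rewrite mulmxDr mulmxDl mxE. Qed.

Lemma quadZ n (v : 'cV[C]_n) a (A : 'M[C]_n) :
  (hc v *m (a *: A) *m v) 0 0 = a * (hc v *m A *m v) 0 0.
Proof. by rewrite -scalemxAr -scalemxAl mxE. Qed.

Lemma quad_outer n (v w : 'cV[C]_n) :
  (hc v *m (w *m hc w) *m v) 0 0 = (hc v *m w) 0 0 * ((hc v *m w) 0 0)^*.
Proof. by rewrite mulmxA -mulmxA mxE big_ord1 -hcE hcM hcK. Qed.

Lemma gram_ge0 n (X : 'cV[C]_n) : 0 <= (hc X *m X) 0 0.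
Proof. by rewrite mxE sumr_ge0 // => i _; rewrite hcE mulrC mul_conjC_ge0. Qed.

Lemma gram_eq0 m n (X : 'M[C]_(m, n)) : hc X *m X = 0 -> X = 0.
Proof.
move=> XX0; apply/matrixP => i j; rewrite mxE.
have Xj0 : \sum_k (X k j)^* * X k j = (hc X *m X) j j.
  by rewrite mxE; apply: eq_bigr => k _; rewrite hcE.
rewrite XX0 mxE in Xj0.
have nneg k : true -> 0 <= (X k j)^* * X k j by rewrite mulrC mul_conjC_ge0.
have /eqP := @psumr_eq0P _ _ _ _ nneg Xj0 i isT.
by rewrite mulf_eq0 conjC_eq0 orbb => /eqP.
Qed.

Lemma psd_outer n (X : 'cV[C]_n) : psd (X *m hc X).
Proof.
split; first by rewrite hcM hcK.
move=> v; have -> : hc v *m (X *m hc X) *m v = hc (hc X *m v) *m (hc X *m v).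
  by rewrite hcM hcK !mulmxA.
exact: gram_ge0.
Qed.

Lemma psd1 n : psd (1%:M : 'M[C]_n).
Proof.
split=> [|v]; last by rewrite mulmx1 gram_ge0.
by apply/matrixP => i j; rewrite hcE !mxE conjC_nat eq_sym.
Qed.

Lemma psdZ n a (A : 'M[C]_n) : 0 <= a -> psd A -> psd (a *: A).
Proof.
move=> a0 [hA pA]; split; first by rewrite hcZ hA geC0_conj.
by move=> v; rewrite quadZ mulr_ge0.
Qed.

Lemma psdD n (A B : 'M[C]_n) : psd A -> psd B -> psd (A + B).
Proof.
move=> [hA pA] [hB pB]; split; first by rewrite hcD hA hB.
by move=> v; rewrite quadD addr_ge0.
Qed.

Lemma psd_diag_ge0 n (A : 'M[C]_n) i : psd A -> 0 <= A i i.
Proof.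
move=> [_ pA]; have := pA (delta_mx i 0).
have -> : hc (delta_mx i 0 : 'cV[C]_n) = delta_mx 0 i.
  by apply/matrixP => k l; rewrite hcE !mxE conjC_nat andbC.
by rewrite -rowE -colE !mxE.
Qed.

End PsdMatrices.

Section TwoByTwo.
Variable R : realType.
Local Notation C := R[i].

Lemma big_ord2 (V : nmodType) (F : 'I_2 -> V) : \sum_(i < 2) F i = F q0 + F q1.
Proof. by rewrite big_ord_recl big_ord1; congr (_ + F _); apply/val_inj. Qed.

Lemma ord2P (i : 'I_2) : i = q0 \/ i = q1.
Proof. by case: i => [[|[|//]] ?]; [left|right]; apply/val_inj. Qed.

Definition cv2 (v0 v1 : C) : 'cV[C]_2 := \col_k (if k == q0 then v0 else v1).

Lemma det_mx22 (M : 'M[C]_2) : \det M = M q0 q0 * M q1 q1 - M q0 q1 * M q1 q0.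
Proof.
rewrite (expand_det_row _ q0) big_ord2 /cofactor !det_mx11 !mxE /= expr0 expr1.
have -> : lift q0 0 = q1 by apply/val_inj.
have -> : lift q1 0 = q0 by apply/val_inj.
by rewrite mul1r mulN1r mulrN.
Qed.

Lemma mxtrace_mx22 (M : 'M[C]_2) : \tr M = M q0 q0 + M q1 q1.
Proof. exact: big_ord2. Qed.

Lemma mx22_Cayley_Hamilton (M : 'M[C]_2) : M *m M = \tr M *: M - (\det M)%:M.
Proof.
rewrite mxtrace_mx22 det_mx22; apply/matrixP => i j; rewrite !mxE big_ord2.
by case: (ord2P i) => ->; case: (ord2P j) => ->; rewrite /= ?mulr1n ?mulr0n; ring.
Qed.

Lemma quad_cv2 (M : 'M[C]_2) v0 v1 :
  (hc (cv2 v0 v1) *m M *m cv2 v0 v1) 0 0 =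
  v0^* * (M q0 q0 * v0 + M q0 q1 * v1) + v1^* * (M q1 q0 * v0 + M q1 q1 * v1).
Proof. by rewrite !mxE big_ord2 !mxE !big_ord2 !hcE !mxE /=; ring. Qed.

Lemma psd_mx22_det_ge0 (M : 'M[C]_2) : psd M -> 0 <= \det M.
Proof.
move=> psdM; have [hM pM] := psdM.
set a := M q0 q0; set d := M q1 q1; set b := M q0 q1.
have M10 : M q1 q0 = b^* by rewrite -hM hcE.
have detE : \det M = a * d - b * b^* by rewrite det_mx22 M10.
have aJ : a^* = a by rewrite -hcE hM.
have dJ : d^* = d by rewrite -hcE hM.
have a0 : 0 <= a := psd_diag_ge0 q0 psdM.
have d0 : 0 <= d := psd_diag_ge0 q1 psdM.
have [|ad_neq0] := boolP (a + d == 0).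
  rewrite paddr_eq0 // => /andP [/eqP a_0 /eqP d_0].
  have -> : \det M = 2^-1 * (hc (cv2 (- b) 1) *m M *m cv2 (- b) 1) 0 0.
    by rewrite detE quad_cv2 -/a -/b -/d M10 a_0 d_0 rmorphN rmorph1; field.
  by rewrite mulr_ge0 ?invr_ge0.
have ad_gt0 : 0 < a + d by rewrite lt0r ad_neq0 addr_ge0.
(* the form takes the values a * det M and d * det M at (-b, a) and (d, -b^* ) *)
have -> : \det M = (a + d)^-1 * ((hc (cv2 (- b) a) *m M *m cv2 (- b) a) 0 0
                                + (hc (cv2 d (- b^*)) *m M *m cv2 d (- b^*)) 0 0).
  rewrite detE !quad_cv2 -/a -/b -/d M10 !rmorphN /= conjCK aJ dJ.
  by field; rewrite ad_neq0.
by rewrite mulr_ge0 ?invr_ge0 ?ltW ?addr_ge0.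
Qed.

Lemma psd_mx22_sqrt (M : 'M[C]_2) : psd M -> exists S, psd S /\ S *m S = M.
Proof.
move=> psdM; set dl := sqrtC (\det M); set t := sqrtC (\tr M + 2 * dl).
have dl0 : 0 <= dl by rewrite sqrtC_ge0 psd_mx22_det_ge0.
have tr0 : 0 <= \tr M by rewrite mxtrace_mx22 addr_ge0 // psd_diag_ge0.
have t0 : 0 <= t by rewrite sqrtC_ge0 addr_ge0 // mulr_ge0.
have sqrM : (M + dl%:M) *m (M + dl%:M) = (\tr M + 2 * dl) *: M.
  rewrite mulmxDl !mulmxDr mx22_Cayley_Hamilton mul_mx_scalar mul_scalar_mx.
  rewrite -scalar_mxM -expr2 sqrtCK; apply/matrixP => i j; rewrite !mxE; ring.
exists (t^-1 *: (M + dl%:M)); split.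
  by apply: psdZ; rewrite ?invr_ge0 // -scalemx1; apply/psdD/psdZ/psd1.
rewrite -scalemxAl -scalemxAr scalerA sqrM scalerA -expr2 exprVn sqrtCK.
have [trdl0|trdl_neq0] := eqVneq (\tr M + 2 * dl) 0; last by rewrite mulVf ?scale1r.
move: trdl0 => /eqP; rewrite paddr_eq0 ?mulr_ge0 // mulf_eq0 pnatr_eq0 /=.
move=> /andP [/eqP tr_0 /eqP dl_0].
have MM0 : hc M *m M = 0.
  rewrite psdM.1 mx22_Cayley_Hamilton tr_0 -[\det M]sqrtCK -/dl dl_0.
  by rewrite expr0n scale0r raddf0 subr0.
by rewrite (gram_eq0 MM0) scaler0.
Qed.

End TwoByTwo.

Section RankOneFidelity.
Variable R : realType.
Local Notation C := R[i].

Lemma mxsqrtP n (A S : 'M[C]_n) : psd S -> S *m S = A ->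
  psd (mxsqrt A) /\ mxsqrt A *m mxsqrt A = A.
Proof. by move=> pS SS; apply: (@xgetI _ 0 [set T | psd T /\ T *m T = A] S). Qed.

Lemma psd_sqrt_outer n (X : 'cV[C]_n) : exists S, psd S /\ S *m S = X *m hc X.
Proof.
set g := (hc X *m X) 0 0.
have XX : hc X *m X = g%:M by rewrite [LHS]mx11_scalar.
have [g0|g_neq0] := eqVneq g 0.
  have -> : X = 0 by apply: gram_eq0; rewrite XX g0 -scalemx1 scale0r.
  by exists 0; rewrite mulmx0; have := psd_outer (0 : 'cV[C]_n); rewrite mul0mx.
exists ((sqrtC g)^-1 *: (X *m hc X)); split.
  by apply: psdZ (psd_outer X); rewrite invr_ge0 sqrtC_ge0 gram_ge0.
rewrite -scalemxAl -scalemxAr scalerA -mulmxA (mulmxA (hc X)) XX mul_scalar_mx.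
by rewrite -scalemxAr scalerA -invfM -expr2 sqrtCK mulVf ?scale1r.
Qed.

Lemma psd_sqrt_outer_eigen n (Y : 'M[C]_n) (X : 'cV[C]_n) :
  psd Y -> Y *m Y = X *m hc X -> Y *m X = sqrtC ((hc X *m X) 0 0) *: X.
Proof.
move=> [hY pY] YY; set g := (hc X *m X) 0 0.
have XX : hc X *m X = g%:M by rewrite [LHS]mx11_scalar.
have [g0|g_neq0] := eqVneq g 0.
  have -> : X = 0 by apply: gram_eq0; rewrite XX g0 -scalemx1 scale0r.
  by rewrite mulmx0 scaler0.
have X_neq0 : X != 0 by apply: contraNneq g_neq0 => X0; rewrite /g X0 mulmx0 mxE.
set mu := (hc X *m Y *m X) 0 0; set lam := mu / g.
have XYX : hc X *m Y *m X = mu%:M by rewrite [LHS]mx11_scalar.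
have Y_XXt : Y *m (X *m hc X) = (X *m hc X) *m Y by rewrite -YY mulmxA.
have gYX : g *: (Y *m X) = mu *: X.
  by rewrite -!mul_mx_scalar -XX -XYX !mulmxA -(mulmxA Y) Y_XXt.
have YX : Y *m X = lam *: X.
  by apply: (scalerI g_neq0); rewrite gYX scalerA mulrC divfK.
have lam0 : 0 <= lam by rewrite divr_ge0 ?pY ?gram_ge0.
have lam2 : lam ^+ 2 = g.
  have : lam ^+ 2 *: X = g *: X.
    rewrite expr2 -scalerA -YX scalemxAr -YX mulmxA YY -mulmxA XX.
    exact: mul_mx_scalar.
  move/eqP; rewrite -subr_eq0 -scalerBl scaler_eq0 (negbTE X_neq0) orbF subr_eq0.
  by move/eqP.
by rewrite -lam2 sqrCK.
Qed.

Lemma mxtrace_psd_sqrt_outer n (Y : 'M[C]_n) (X : 'cV[C]_n) :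
  psd Y -> Y *m Y = X *m hc X -> \tr Y = sqrtC ((hc X *m X) 0 0).
Proof.
move=> psdY YY; have [hY _] := psdY.
have YX := psd_sqrt_outer_eigen psdY YY; set lam := sqrtC _ in YX *.
have YYY : Y *m (Y *m Y) = lam *: (Y *m Y) by rewrite YY mulmxA YX scalemxAl.
set Z := Y *m Y - lam *: Y.
have hZ : hc Z = Z.
  by rewrite /Z -scaleNr hcD hcZ hcM hY rmorphN /= geC0_conj // sqrtC_ge0 gram_ge0.
have YZ : Y *m Z = 0 by rewrite /Z mulmxBr -scalemxAr YYY subrr.
have Z0 : Z = 0.
  apply: gram_eq0; rewrite hZ {1}/Z mulmxBl -mulmxA YZ -scalemxAl YZ.
  by rewrite mulmx0 scaler0 subrr.
have YYlam : Y *m Y = lam *: Y by apply/eqP; rewrite -subr_eq0 -/Z Z0.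
have trYY : \tr (Y *m Y) = lam ^+ 2.
  by rewrite YY mxtrace_mulC [hc X *m X]mx11_scalar mxtrace_scalar /lam sqrtCK.
have [lam0|lam_neq0] := eqVneq lam 0.
  have -> : Y = 0 by apply: gram_eq0; rewrite hY YYlam lam0 scale0r.
  by rewrite mxtrace0.
by apply: (mulfI lam_neq0); rewrite -mxtraceZ -YYlam trYY.
Qed.

Lemma fidelity_outer n (A : 'M[C]_n) (V : 'cV[C]_n) :
  (exists S, psd S /\ S *m S = A) ->
  fidelity A (V *m hc V) = sqrtC ((hc V *m A *m V) 0 0).
Proof.
move=> [S [psdS SS]]; rewrite /fidelity.
have [[hT _] TT] := mxsqrtP psdS SS; set T := mxsqrt A in hT TT *.
have -> : T *m (V *m hc V) *m T = (T *m V) *m hc (T *m V) by rewrite hcM hT !mulmxA.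
have [S' [psdS' SS']] := psd_sqrt_outer (T *m V).
have [psdY YY] := mxsqrtP psdS' SS'.
by rewrite (mxtrace_psd_sqrt_outer psdY YY) hcM hT -TT !mulmxA.
Qed.

Lemma fidelity_scaled_outer n (A : 'M[C]_n) (V : 'cV[C]_n) b : 0 <= b ->
  (exists S, psd S /\ S *m S = A) ->
  fidelity A (b *: (V *m hc V)) = sqrtC (b * (hc V *m A *m V) 0 0).
Proof.
move=> b0 sqrtA; have sbJ : (sqrtC b)^* = sqrtC b by rewrite geC0_conj ?sqrtC_ge0.
have -> : b *: (V *m hc V) = (sqrtC b *: V) *m hc (sqrtC b *: V).
  by rewrite hcZ sbJ -scalemxAl -scalemxAr scalerA -expr2 sqrtCK.
by rewrite fidelity_outer // hcZ sbJ -!scalemxAl -scalemxAr scalerA mxE -expr2 sqrtCK.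
Qed.

End RankOneFidelity.

Section GhzLikeAssemblages.
Variable R : realType.
Local Notation C := R[i].

Lemma mxvec_index_eq m n (i k : 'I_m) (j l : 'I_n) :
  (mxvec_index i j == mxvec_index k l) = (i == k) && (j == l).
Proof.
have inj : injective (fun p : 'I_m * 'I_n => mxvec_index p.1 p.2).
  by move=> [? ?] [? ?] /= /cast_ord_inj /enum_rank_inj.
by rewrite (inj_eq inj (i, j) (k, l)).
Qed.

Lemma kronE m1 n1 m2 n2 (A : 'M[C]_(m1, n1)) (B : 'M[C]_(m2, n2)) i k j l :
  kron A B (mxvec_index i k) (mxvec_index j l) = A i j * B k l.
Proof.
rewrite /kron summxE (bigD1 i) //= [X in _ + X]big1 ?addr0 => [|i' /negbTE ii'];
  last first.
  rewrite summxE big1 // => j' _; rewrite summxE big1 // => k' _.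
  rewrite summxE big1 // => l' _.
  by rewrite !mxE !mxvec_index_eq [i == _]eq_sym ii' /= mulr0.
rewrite summxE (bigD1 j) //= [X in _ + X]big1 ?addr0 => [|j' /negbTE jj'];
  last first.
  rewrite summxE big1 // => k' _; rewrite summxE big1 // => l' _.
  by rewrite !mxE !mxvec_index_eq [j == _]eq_sym jj' /= andbF mulr0.
rewrite summxE (bigD1 k) //= [X in _ + X]big1 ?addr0 => [|k' /negbTE kk'];
  last first.
  rewrite summxE big1 // => l' _.
  by rewrite !mxE !mxvec_index_eq [k == _]eq_sym kk' /= andbF mulr0.
rewrite summxE (bigD1 l) //= [X in _ + X]big1 ?addr0 => [|l' /negbTE ll'];
  last by rewrite !mxE !mxvec_index_eq [l == _]eq_sym ll' /= !andbF mulr0.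
by rewrite !mxE !mxvec_index_eq !eqxx mulr1.
Qed.

Definition ghz_like (alpha : 'cV[C]_2) : 'cV[C]_(2 * (2 * 2)) :=
  \sum_k alpha k 0 *: ket3 R k k k.

(* the isometry |k> |-> |kk> of C^2 into H_B (x) H_C *)
Definition copy2 : 'M[C]_(2 * 2, 2) := \matrix_(p, k) (p == mxvec_index k k)%:R.

Definition embed (M : 'M[C]_2) : 'M[C]_(2 * 2) := copy2 *m M *m hc copy2.

Definition steered (p alpha : 'cV[C]_2) : 'cV[C]_2 := \col_k ((p k 0)^* * alpha k 0).

Lemma psi_GHZ_ghz_like : psi_GHZ R = ghz_like (const_mx (Num.sqrt 2)^-1%:C).
Proof. by rewrite /psi_GHZ /ghz_like big_ord2 scalerDr !mxE. Qed.

Lemma psi_GGHZ_ghz_like (theta : R) :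
  psi_GGHZ theta = ghz_like (cv2 (cos theta)%:C (sin theta)%:C).
Proof. by rewrite /psi_GGHZ /ghz_like big_ord2 !mxE. Qed.

Lemma ghz_likeE alpha i l :
  ghz_like alpha (mxvec_index i l) 0 = alpha i 0 * (l == mxvec_index i i)%:R.
Proof.
rewrite /ghz_like summxE (bigD1 i) //= big1 ?addr0 => [|k /negbTE ki].
  by rewrite !mxE mxvec_index_eq !eqxx andbT.
by rewrite !mxE mxvec_index_eq eq_sym ki mulr0.
Qed.

Lemma kron_ghz_likeE (P : 'M[C]_2) alpha i j :
  (kron P 1%:M *m ghz_like alpha) (mxvec_index i j) 0 =
  \sum_k alpha k 0 * P i k * (j == mxvec_index k k)%:R.
Proof.
rewrite /ghz_like mulmx_sumr summxE; apply: eq_bigr => k _.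
by rewrite -scalemxAr mxE /ket3 -colE mxE kronE mxE mulrA [alpha k 0 * _]mulrC.
Qed.

Lemma embedE M j l : embed M j l =
  \sum_k \sum_m (j == mxvec_index k k)%:R * M k m * (l == mxvec_index m m)%:R.
Proof.
rewrite /embed mxE exchange_big; apply: eq_bigr => m _.
rewrite mxE mulr_suml; apply: eq_bigr => k _.
by rewrite hcE !mxE conjC_nat.
Qed.

Lemma assemblage_ghz_like alpha x a (lam : C) (p : 'cV[C]_2) :
  proj R a x = lam *: (p *m hc p) ->
  assemblage (ghz_like alpha) x a =
  embed (lam *: (steered p alpha *m hc (steered p alpha))).
Proof.
move=> projE; apply/matrixP => j l.
rewrite /assemblage mulmxA /ptrace1 mxE embedE.
under eq_bigr => i _ do rewrite mxE big_ord1 hcE kron_ghz_likeE ghz_likeE.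
rewrite projE !big_ord2 !mxE !big_ord1 !hcE !mxE !rmorphM /= !conjCK.
ring.
Qed.

Lemma copy2_isometry : hc copy2 *m copy2 = 1%:M.
Proof.
apply/matrixP => k m; rewrite !mxE (bigD1 (mxvec_index k k)) //=.
rewrite big1 => [|j /negbTE jk].
  by rewrite hcE !mxE eqxx conjC_nat mul1r addr0 mxvec_index_eq andbb.
by rewrite hcE !mxE jk conjC_nat mul0r.
Qed.

Lemma embedM (M N : 'M[C]_2) : embed M *m embed N = embed (M *m N).
Proof. by rewrite /embed !mulmxA -(mulmxA _ (hc _)) copy2_isometry mulmx1. Qed.

Lemma embedD (M N : 'M[C]_2) : embed (M + N) = embed M + embed N.
Proof. by rewrite /embed mulmxDr mulmxDl. Qed.

Lemma embedZ a (M : 'M[C]_2) : embed (a *: M) = a *: embed M.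
Proof. by rewrite /embed -scalemxAr -scalemxAl. Qed.

Lemma embed_outer (v : 'cV[C]_2) :
  embed (v *m hc v) = (copy2 *m v) *m hc (copy2 *m v).
Proof. by rewrite /embed hcM !mulmxA. Qed.

Lemma quad_embed (v : 'cV[C]_2) (M : 'M[C]_2) :
  hc (copy2 *m v) *m embed M *m (copy2 *m v) = hc v *m M *m v.
Proof.
rewrite /embed hcM !mulmxA -(mulmxA _ (hc _)) copy2_isometry mulmx1.
by rewrite -(mulmxA _ (hc _)) copy2_isometry mulmx1.
Qed.

Lemma psd_embed (M : 'M[C]_2) : psd M -> psd (embed M).
Proof.
move=> [hM pM]; split; first by rewrite /embed !hcM hcK hM mulmxA.
by move=> v; have := pM (hc copy2 *m v); rewrite /embed hcM hcK !mulmxA.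
Qed.

Lemma embed_sqrt (M : 'M[C]_2) : psd M -> exists S, psd S /\ S *m S = embed M.
Proof.
move=> /psd_mx22_sqrt [S [psdS SS]].
by exists (embed S); rewrite embedM SS; split; first exact: psd_embed.
Qed.

Lemma steered_dot (p alpha beta : 'cV[C]_2) :
  (hc (steered p alpha) *m steered p beta) 0 0 =
  \sum_k p k 0 * (p k 0)^* * ((alpha k 0)^* * beta k 0).
Proof.
rewrite mxE; apply: eq_bigr => k _.
by rewrite hcE !mxE rmorphM /= conjCK; ring.
Qed.

Lemma sigma_GHZ_embed x a (lam : C) (p : 'cV[C]_2) :
  proj R a x = lam *: (p *m hc p) ->
  sigma_GHZ R x a =
  embed ((lam / 2) *: (steered p (const_mx 1) *m hc (steered p (const_mx 1)))).
Proof.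
move=> projE; rewrite /sigma_GHZ psi_GHZ_ghz_like (assemblage_ghz_like _ projE).
set g : C := (Num.sqrt 2)^-1%:C.
have -> : steered p (const_mx g) = g *: steered p (const_mx 1).
  by apply/matrixP => i j; rewrite !mxE mulr1 mulrC.
have gg : g * g^* = 2^-1.
  rewrite geC0_conj ?ler0c ?invr_ge0 ?sqrtr_ge0 // -expr2 -rmorphXn /= exprVn.
  by rewrite sqr_sqrtr ?ler0n // fmorphV rmorph_nat.
by rewrite hcZ -scalemxAl -scalemxAr !scalerA -mulrA gg.
Qed.

Lemma fidelity_mix_ghz_like (alpha p : 'cV[C]_2) (Ps Pf lam : C) x a :
  proj R a x = lam *: (p *m hc p) -> 0 <= lam -> 0 <= Ps -> 0 <= Pf ->
  let r k := p k 0 * (p k 0)^* in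
  let ov := \sum_k r k * alpha k 0 in
  fidelity (Ps *: sigma_GHZ R x a + Pf *: assemblage (ghz_like alpha) x a)
           (sigma_GHZ R x a) =
  sqrtC (lam / 2 * (Ps * (lam / 2) * (\sum_k r k) ^+ 2 + Pf * lam * (ov * ov^*))).
Proof.
move=> projE lam0 Ps0 Pf0 r ov.
rewrite (sigma_GHZ_embed projE) (assemblage_ghz_like _ projE).
set w := steered p (const_mx 1); set u := steered p alpha.
have lam20 : 0 <= lam / 2 by rewrite divr_ge0 ?ler0n.
rewrite -!embedZ -embedD embedZ embed_outer fidelity_scaled_outer //; last first.
  by apply/embed_sqrt/psdD; do 2 apply: psdZ => //; exact: psd_outer.
rewrite quad_embed quadD !quadZ !quad_outer.
have -> : (hc w *m w) 0 0 = \sum_k r k.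
  by rewrite steered_dot; apply: eq_bigr => k _; rewrite !mxE conjC1 !mulr1.
have -> : (hc w *m u) 0 0 = ov.
  by rewrite steered_dot; apply: eq_bigr => k _; rewrite !mxE conjC1 mul1r.
rewrite geC0_conj ?sumr_ge0 // => [|k _]; last exact: mul_conjC_ge0.
by rewrite -expr2 !mulrA.
Qed.

End GhzLikeAssemblages.

Section PauliProjectors.
Variable R : realType.
Local Notation C := R[i].

Lemma proj_sigma_x a :
  proj R a (inord 0) = 2^-1 *: (cv2 1 ((-1) ^+ a) *m hc (cv2 1 ((-1) ^+ a))).
Proof.
apply/matrixP => i j; rewrite /proj /pauli /= inordK // /sigma_x !mxE big_ord1 hcE !mxE.
case: (ord2P a) => ->; case: (ord2P i) => ->; case: (ord2P j) => ->.
all: rewrite /= ?expr0 ?expr1 ?conjC1 ?conjCN1; ring.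
Qed.

Lemma proj_sigma_y a :
  proj R a (inord 1) = 2^-1 *: (cv2 1 ((-1) ^+ a * 'i) *m hc (cv2 1 ((-1) ^+ a * 'i))).
Proof.
apply/matrixP => i j; rewrite /proj /pauli /= inordK // /sigma_y !mxE big_ord1 hcE !mxE.
have ii := @mulCii C.
case: (ord2P a) => ->; case: (ord2P i) => ->; case: (ord2P j) => ->.
all: rewrite /= ?expr0 ?expr1 ?conjC1 ?rmorphM /= ?conjC1 ?conjCN1 ?conjCi; ring: ii.
Qed.

Lemma proj_sigma_z a :
  proj R a (inord 2) = 1 *: ((delta_mx a 0 : 'cV[C]_2) *m hc (delta_mx a 0)).
Proof.
apply/matrixP => i j; rewrite /proj /pauli /= inordK // /sigma_z !mxE big_ord1 hcE !mxE.
case: (ord2P a) => ->; case: (ord2P i) => ->; case: (ord2P j) => ->.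
all: by rewrite /= ?expr0 ?expr1 ?conjC1 ?conjC0; field.
Qed.

End PauliProjectors.

Lemma sqrtr_addr_le (R : rcfType) (A B u : R) : 0 <= A -> 0 <= B ->
  u ^+ 2 <= 4 * A * B -> Num.sqrt (A + B + u) <= Num.sqrt A + Num.sqrt B.
Proof.
move=> A0 B0 uAB; set a := Num.sqrt A; set b := Num.sqrt B.
have a0 : 0 <= a := sqrtr_ge0 A; have b0 : 0 <= b := sqrtr_ge0 B.
have ab0 : 0 <= a * b by rewrite mulr_ge0.
have a2 : a ^+ 2 = A := sqr_sqrtr A0; have b2 : b ^+ 2 = B := sqr_sqrtr B0.
have u_le : u <= 2 * a * b by rewrite -a2 -b2 in uAB; nra.
rewrite -(ger0_norm (addr_ge0 a0 b0)) -sqrtr_sqr ler_sqrt ?sqr_ge0 //.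
by rewrite sqrrD a2 b2; lra.
Qed.

Section RealMixture.
Variables (R : realType) (Ps Pf c s : R).
Hypotheses (Ps0 : 0 <= Ps) (Pf0 : 0 <= Pf).
Local Notation C := R[i].

Definition sigma_mix x a : 'M[C]_(2 * 2) :=
  Ps%:C *: sigma_GHZ R x a + Pf%:C *: assemblage (ghz_like (cv2 c%:C s%:C)) x a.

Lemma real_complex_real (y : R) : y%:C \is Num.real.
Proof. by apply/complex_realP; exists y. Qed.

Lemma sqrtC_sqr_real (E : C) (y : R) : 0 <= y -> E = (y ^+ 2)%:C -> sqrtC E = y%:C.
Proof. by move=> y0 ->; rewrite rmorphXn sqrCK // ler0c. Qed.

Lemma mix_weight_ge0 y : 0 <= 2^-1 * (Ps / 2 + Pf * y ^+ 2).
Proof.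
by rewrite mulr_ge0 ?invr_ge0 ?ler0n // addr_ge0 ?divr_ge0 ?ler0n // mulr_ge0 // sqr_ge0.
Qed.

Lemma fidelity_mix_unbiased x a (z : C) :
  proj R a x = 2^-1 *: (cv2 1 z *m hc (cv2 1 z)) -> z * z^* = 1 ->
  fidelity (sigma_mix x a) (sigma_GHZ R x a) =
  (2^-1 * Num.sqrt (Ps + Pf * (c + s) ^+ 2 / 2))%:C.
Proof.
move=> projE zz.
rewrite /sigma_mix (fidelity_mix_ghz_like _ projE) ?ler0c ?invr_ge0 ?ler0n //=.
have K0 : 0 <= Ps + Pf * (c + s) ^+ 2 / 2.
  by rewrite addr_ge0 // divr_ge0 ?ler0n // mulr_ge0 // sqr_ge0.
apply: sqrtC_sqr_real; first by rewrite mulr_ge0 ?invr_ge0 ?sqrtr_ge0.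
rewrite !big_ord2 !mxE /= conjC1 mulr1 zz !mul1r.
rewrite conj_Creal ?rpredD ?real_complex_real //.
rewrite exprMn sqr_sqrtr // !(rmorphM, rmorphD, rmorphXn, fmorphV, rmorph_nat) /=.
by field.
Qed.

Lemma fidelity_mix_z a :
  fidelity (sigma_mix (inord 2) a) (sigma_GHZ R (inord 2) a) =
  (Num.sqrt (2^-1 * (Ps / 2 + Pf * (if a == q0 then c else s) ^+ 2)))%:C.
Proof.
rewrite /sigma_mix (fidelity_mix_ghz_like _ (proj_sigma_z R a)) ?ler01 ?ler0c //=.
apply: sqrtC_sqr_real; first exact: sqrtr_ge0.
rewrite sqr_sqrtr ?mix_weight_ge0 // !big_ord2 !mxE; case: (ord2P a) => -> /=.
all: rewrite !(conjC1, conjC0, mulr1, mulr0, mul1r, mul0r, addr0, add0r).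
all: rewrite conj_Creal ?real_complex_real //.
all: by rewrite !(rmorphM, rmorphD, rmorphXn, fmorphV, rmorph_nat) /=; field.
Qed.

Lemma sum_fidelity_mix_unbiased x (z : 'I_2 -> C) :
  (forall a, proj R a x = 2^-1 *: (cv2 1 (z a) *m hc (cv2 1 (z a)))) ->
  (forall a, z a * (z a)^* = 1) ->
  \sum_a fidelity (sigma_mix x a) (sigma_GHZ R x a) =
  (Num.sqrt (Ps + Pf * (c + s) ^+ 2 / 2))%:C.
Proof.
move=> projE zz.
rewrite (eq_bigr (fun=> (2^-1 * Num.sqrt (Ps + Pf * (c + s) ^+ 2 / 2))%:C)).
  by rewrite big_ord2 -rmorphD; congr (_%:C); field.
by move=> a _; exact: fidelity_mix_unbiased (projE a) (zz a).
Qed.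

Lemma sum_fidelity_mix_z :
  \sum_a fidelity (sigma_mix (inord 2) a) (sigma_GHZ R (inord 2) a) =
  (Num.sqrt (2^-1 * (Ps / 2 + Pf * c ^+ 2)) +
   Num.sqrt (2^-1 * (Ps / 2 + Pf * s ^+ 2)))%:C.
Proof. by rewrite big_ord2 rmorphD; congr (_ + _); exact: fidelity_mix_z. Qed.

Lemma sqrt_mix_le :
  Num.sqrt (Ps + Pf * (c + s) ^+ 2 / 2) <=
  Num.sqrt (2^-1 * (Ps / 2 + Pf * c ^+ 2)) + Num.sqrt (2^-1 * (Ps / 2 + Pf * s ^+ 2)).
Proof.
set A := 2^-1 * _; set B := 2^-1 * _.
have -> : Ps + Pf * (c + s) ^+ 2 / 2 = A + B + (Ps / 2 + Pf * c * s).
  by rewrite /A /B; field.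
apply: sqrtr_addr_le; rewrite ?mix_weight_ge0 // -subr_ge0.
have -> : 4 * A * B - (Ps / 2 + Pf * c * s) ^+ 2 = Ps * Pf * (c - s) ^+ 2 / 2.
  by rewrite /A /B; field.
by rewrite divr_ge0 ?ler0n // mulr_ge0 ?sqr_ge0 // mulr_ge0.
Qed.

Lemma assemblage_fidelity_mix :
  assemblage_fidelity sigma_mix (sigma_GHZ R) =
  (Num.sqrt (Ps + Pf * (c + s) ^+ 2 / 2))%:C.
Proof.
(* rewrite inside one argument of the min at a time: matching a fidelity of one
   setting against that of another triggers a very costly conversion check *)
rewrite /assemblage_fidelity.
rewrite [X in Num.min X _](sum_fidelity_mix_unbiased (@proj_sigma_x R)); last first.
  by move=> a; rewrite -normCK normrX normrN1 !expr1n.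
rewrite [X in Num.min _ (Num.min X _)](sum_fidelity_mix_unbiased (@proj_sigma_y R));
  last first.
  by move=> a; rewrite -normCK normrM normrX normrN1 normCi mulr1 !expr1n.
rewrite [X in Num.min _ (Num.min _ X)]sum_fidelity_mix_z.
rewrite [X in Num.min _ X]Order.POrderTheory.min_l ?lecR ?sqrt_mix_le //.
exact: Order.POrderTheory.minxx.
Qed.

End RealMixture.

Lemma cos_double (R : realType) (x : R) : cos (2 * x) = 1 - 2 * sin x ^+ 2.
Proof. by rewrite (_ : 2 * x = x + x) ?cosD -?expr2 ?cos2sin2; ring. Qed.

Lemma sin_double (R : realType) (x : R) : sin (2 * x) = 2 * sin x * cos x.
Proof. by rewrite (_ : 2 * x = x + x) ?sinD; ring. Qed.

Lemma P_failE (R : realType) (theta : R) N : P_fail theta N = cos (2 * theta) ^+ N.-1.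
Proof. by rewrite /P_fail cos_double. Qed.

Lemma sigma_dist_mix (R : realType) (theta : R) N :
  sigma_dist theta N =
  sigma_mix (P_success theta N) (P_fail theta N) (cos theta) (sin theta).
Proof.
apply/funext => x; apply/funext => a.
by rewrite /sigma_dist /sigma_GGHZ psi_GGHZ_ghz_like.
Qed.

Theorem theorem1 (R : realType) (theta : R) (N : nat) :
  0 < theta < pi / 4 -> (2 <= N)%N ->
  assemblage_fidelity (sigma_dist theta N) (@sigma_GHZ R) =
  (Num.sqrt (1 - 2^-1 * (1 - sin (2 * theta)) * cos (2 * theta) ^+ (N.-1)))%:C.
Proof.
move=> /andP [theta_gt0 theta_lt] _.
have pi_gt0 := pi_gt0 R.
have cos2_ge0 : 0 <= cos (2 * theta).
  by apply: cos_ge0_pihalf; apply/andP; split; lra.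
have Pf_ge0 : 0 <= P_fail theta N by rewrite P_failE exprn_ge0.
have Pf_le1 : P_fail theta N <= 1 by rewrite P_failE exprn_ile1 ?cos_le1.
rewrite sigma_dist_mix assemblage_fidelity_mix ?subr_ge0 //.
congr (Num.sqrt _)%:C.
by rewrite /P_success P_failE sqrrD sin2cos2 sin_double; field.
Qed.
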